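(* Let $p$ be a prime number and let $f(t)\in\mathbb{Z}[t]$ be monic. Suppose $f(t)\equiv\Phi_m(t)\bmod p$ for some $m\in\mathbb{Z}_{>0}$ with $p\nmid m$. Then $\lim_{n\to\infty}\mathrm{Res}(t^{p^n}-1,f(t))=\Phi_m(1)$ in $\mathbb{Z}_p$; for $m\ge2$ this equals $l$ if $m=l^e$ for a prime number $l$ and some $e\in\mathbb{Z}_{>0}$, and equals $1$ otherwise.
   Context: $\Phi_m(t)$ denotes the $m$-th cyclotomic polynomial. For $n\in\mathbb{Z}_{>0}$, $\mathrm{Res}(t^n-1,f(t))=\prod_{\zeta^n=1}f(\zeta)$, the product over all $n$-th roots of unity. *)

From mathcomp Require Import all_boot all_order all_algebra all_field.
Set Implicit Arguments. Unset Strict Implicit. Unset Printing Implicit Defensive.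
Import Order.TTheory GRing.Theory Num.Theory.
Local Open Scope ring_scope.

(* Res(t^N - 1, f) = prod over N-th roots of unity of f(zeta), computed in
   algC as \prod_(k < N) f(z^k) for a primitive N-th root of unity z. *)
Definition res_unity (N : nat) (z : algC) (f : {poly int}) : algC :=
  \prod_(k < N) (map_poly (intr : int -> algC) f).[z ^+ k].

(* p-adic convergence of a sequence of (a priori algebraic) numbers to an
   integer L in Z_p:  for every k, eventually a n - L lies in p^k Z. *)
Definition padic_cvg (p : nat) (a : nat -> algC) (L : int) : Prop :=
  forall k : nat, exists N : nat, forall n : nat, (N <= n)%N ->
    exists c : int, a n - L%:~R = ((p ^ k)%N)%:R * c%:~R.

(* Write R_N(A) for the product of A(zeta) over the N-th roots of unity zeta.
   Grouping the p^(n+1)-th roots of unity into cosets of the p-th roots gives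
   R_{p^(n+1)}(A) = R_{p^n}(A') for the Graeffe transform A'(t^p) = prod_{w^p = 1} A(w t),
   and perturbing A by p^j H (j > 0) over the algebraic integers perturbs A' by
   p^(j+1) times an algebraic integer polynomial.  By induction,
   R_{p^n}(f) = R_{p^n}(Phi_m) + p^(n+1) c with c an algebraic integer; c is also
   rational because resultants of integer polynomials are integers (determinants of
   circulant matrices), so c is an integer.  Since p does not divide m, zeta -> zeta^(p^n)
   permutes the primitive m-th roots of unity, whence R_{p^n}(Phi_m) = Phi_m(1) up to a
   sign that is trivial whenever Phi_m(1) <> 0.  Finally the identity
   prod_{1 < d | m} Phi_d(1) = m forces Phi_m(1) = exp(Lambda(m)), Lambda being the von
   Mangoldt function. *)

From HB Require Import structures.
From mathcomp Require Import all_boot all_order all_algebra all_field.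
From mathcomp Require Import ring.
Set Implicit Arguments. Unset Strict Implicit. Unset Printing Implicit Defensive.
Import Order.TTheory GRing.Theory Num.Theory.
Local Open Scope ring_scope.

Section Dilation.
Variable R : comNzRingType.
Implicit Types (c x : R) (A : {poly R}).

Definition dilate c A := A \Po (c *: 'X).

HB.instance Definition _ c := GRing.LRMorphism.copy (dilate c) (comp_poly (c *: 'X)).

Lemma coef_dilate c A i : (dilate c A)`_i = c ^+ i * A`_i.
Proof.
rewrite /dilate comp_polyE.
under eq_bigr do rewrite exprZn scalerA mulrC.
rewrite -(poly_def _ (fun i => c ^+ i * A`_i)) coef_poly; case: ltnP => // le_A_i.
by rewrite nth_default ?mulr0.
Qed.

Lemma horner_dilate c A x : (dilate c A).[x] = A.[c * x].
Proof. by rewrite /dilate horner_comp hornerZ hornerX. Qed.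

Lemma dilate_dilate c d A : dilate c (dilate d A) = dilate (d * c) A.
Proof. by apply/polyP => i; rewrite !coef_dilate mulrA -exprMn (mulrC c d). Qed.

Lemma polyOver_dilate (S : subringClosed R) c A :
  c \in S -> A \is a polyOver S -> dilate c A \is a polyOver S.
Proof. by move=> Sc SA; rewrite polyOver_comp ?polyOverZ ?polyOverX. Qed.

End Dilation.

Section Decimation.
Variables (R : nzRingType) (p : nat).
Hypothesis p_gt0 : (0 < p)%N.
Implicit Types B C : {poly R}.

Definition decimate B := \poly_(i < size B) B`_(p * i).

Lemma coef_decimate B i : (decimate B)`_i = B`_(p * i).
Proof.
rewrite coef_poly; case: ltnP => // le_B_i.
by rewrite nth_default // (leq_trans le_B_i) // leq_pmull.
Qed.

Lemma decimateD B C : decimate (B + C) = decimate B + decimate C.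
Proof. by apply/polyP => i; rewrite coefD !coef_decimate coefD. Qed.

Lemma decimate_natM k B : decimate (k%:R * B) = k%:R * decimate B.
Proof. by apply/polyP => i; rewrite !mulr_natl coefMn !coef_decimate coefMn. Qed.

Lemma polyOver_decimate (S : subringClosed R) B :
  B \is a polyOver S -> decimate B \is a polyOver S.
Proof. by move=> /polyOverP SB; apply/polyOverP => i; rewrite coef_decimate. Qed.

End Decimation.

Lemma prod_perturb_expand (T : comNzRingType) (S : subringClosed T) (e : T)
    (x y : nat -> T) n :
  e \in S -> (forall b, x b \in S) -> (forall b, y b \in S) ->
  exists2 z, z \in S &
    \prod_(0 <= b < n) (x b + e * y b) =
      \prod_(0 <= b < n) x b
      + e * \sum_(0 <= b < n) (y b * \prod_(0 <= c < n | c != b) x c)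
      + e ^+ 2 * z.
Proof.
move=> Se Sx Sy; elim: n => [|n [z Sz IH]].
  exists 0; first exact: rpred0.
  by rewrite !big_geq // !mulr0 !addr0.
pose D := \sum_(0 <= b < n) (y b * \prod_(0 <= c < n | c != b) x c).
have SD : D \in S by rewrite rpred_sum // => b _; rewrite rpredM ?rpred_prod.
have DS : \sum_(0 <= b < n.+1) (y b * \prod_(0 <= c < n.+1 | c != b) x c)
          = D * x n + y n * \prod_(0 <= b < n) x b.
  rewrite big_nat_recr //= /D mulr_suml; congr (_ + _).
    apply: eq_big_nat => b /andP[_ lt_b_n]; rewrite -mulrA big_mkcond big_nat_recr //=.
    by rewrite -big_mkcond /= gtn_eqF.
  rewrite big_mkcond big_nat_recr //= eqxx mulr1; congr (_ * _).
  by apply: eq_big_nat => b /andP[_ lt_b_n]; rewrite ltn_eqF.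
exists (z * x n + D * y n + e * (z * y n)); first by rewrite !(rpredD, rpredM).
by rewrite big_nat_recr //= IH -/D big_nat_recr //= DS; ring.
Qed.

Lemma prod_shift_mod (T : comNzRingType) (F : nat -> T) p b :
  (b < p)%N -> (forall k, F (k %% p)%N = F k) ->
  \prod_(0 <= c < p | c != 0%N) F (b + c)%N = \prod_(0 <= c < p | c != b) F c.
Proof.
move=> lt_b_p F_mod; have p_gt0 : (0 < p)%N by apply: leq_ltn_trans lt_b_p.
rewrite !big_mkord.
pose h (c : 'I_p) : 'I_p := Ordinal (ltn_pmod (b + c) p_gt0).
have h_inj : injective h.
  move=> c1 c2 /(congr1 val) /= /eqP; rewrite eqn_modDl !modn_small // => /eqP.
  exact: val_inj.
rewrite [RHS](reindex_inj h_inj); apply: eq_big => c /=; last by rewrite F_mod.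
by rewrite -{2}(modn_small lt_b_p) -{2}[b]addn0 eqn_modDl mod0n modn_small.
Qed.

Section GraeffeStep.
Variables (R : idomainType) (p : nat) (w : R).
Hypothesis w_prim : p.-primitive_root w.
Let p_gt0 : (0 < p)%N := prim_order_gt0 w_prim.
Implicit Types A B T : {poly R}.

Definition orbit_prod A := \prod_(0 <= b < p) dilate (w ^+ b) A.

Lemma dilate_orbit_prod A : dilate w (orbit_prod A) = orbit_prod A.
Proof.
rewrite /orbit_prod rmorph_prod /=.
under eq_bigr do rewrite dilate_dilate -exprSr.
have [p' p_eq] : exists p', p = p'.+1 by exists p.-1; rewrite prednK.
rewrite p_eq big_nat_recr // big_nat_recl // -p_eq (prim_expr_order w_prim).
by rewrite expr0 mulrC.
Qed.

Lemma coef_orbit_prod A i : ~~ (p %| i)%N -> (orbit_prod A)`_i = 0.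
Proof.
move=> p_ndvd_i; have := congr1 (fun B => B`_i) (dilate_orbit_prod A).
rewrite /= coef_dilate => /eqP; rewrite -subr_eq0 -{2}[_`_i]mul1r -mulrBl.
rewrite mulf_eq0 subr_eq0 -(prim_order_dvd w_prim) (negbTE p_ndvd_i).
by move=> /eqP.
Qed.

Lemma orbit_prod_decimate A : orbit_prod A = decimate p (orbit_prod A) \Po 'X^p.
Proof.
apply/polyP => i; rewrite coef_comp_poly_Xn //.
case: ifPn => [p_dvd_i | /coef_orbit_prod //].
by rewrite coef_decimate // mulnC divnK.
Qed.

Lemma horner_decimate_orbit_prod A x :
  (decimate p (orbit_prod A)).[x ^+ p] = \prod_(0 <= b < p) A.[w ^+ b * x].
Proof.
rewrite -hornerXn -horner_comp -orbit_prod_decimate horner_prod.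
by apply: eq_bigr => b _; rewrite horner_dilate.
Qed.

Lemma sum_expr_prim_root i :
  \sum_(0 <= b < p) (w ^+ i) ^+ b = if (p %| i)%N then p%:R else 0.
Proof.
case: ifPn => [p_dvd_i | p_ndvd_i].
  move: p_dvd_i; rewrite (prim_order_dvd w_prim) => /eqP ->.
  by under eq_bigr do rewrite expr1n; rewrite sumr_const_nat subn0.
have wi_neq1 : w ^+ i - 1 != 0 by rewrite subr_eq0 -(prim_order_dvd w_prim).
apply/eqP; rewrite -(mulrI_eq0 _ (mulfI wi_neq1)) big_mkord -subrX1.
by rewrite exprAC (prim_expr_order w_prim) expr1n subrr.
Qed.

Lemma sum_dilate_orbit T :
  \sum_(0 <= b < p) dilate (w ^+ b) T = p%:R * (decimate p T \Po 'X^p).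
Proof.
apply/polyP => i; rewrite coef_sum mulr_natl coefMn coef_comp_poly_Xn //.
under eq_bigr do rewrite coef_dilate exprAC.
rewrite -mulr_suml sum_expr_prim_root; case: ifP => [p_dvd_i|_]; last first.
  by rewrite mul0r mul0rn.
by rewrite coef_decimate // mulnC divnK // mulr_natl.
Qed.

Variable S : subringClosed R.
Hypothesis wS : w \in S.

Lemma polyOver_orbit_prod A : A \is a polyOver S -> orbit_prod A \is a polyOver S.
Proof. by move=> SA; apply: rpred_prod => b _; rewrite polyOver_dilate ?rpredX. Qed.

Lemma orbit_prod_cong A H j :
  A \is a polyOver S -> H \is a polyOver S -> (0 < j)%N ->
  exists2 W, W \is a polyOver S &
    orbit_prod (A + (p ^ j)%:R * H) = orbit_prod A + (p ^ j.+1)%:R * W.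
Proof.
move=> SA SH j_gt0.
(* The first-order term is the orbit sum of [T], hence [p] times a polynomial
   (sum_dilate_orbit); the higher-order terms carry [p ^ (2 * j)]. *)
have Sdilate b B : B \is a polyOver S -> dilate (w ^+ b) B \is a polyOver S.
  by move=> SB; rewrite polyOver_dilate ?rpredX.
pose T := H * \prod_(0 <= c < p | c != 0%N) dilate (w ^+ c) A.
have ST : T \is a polyOver S by rewrite rpredM // rpred_prod // => c _; apply: Sdilate.
have cross_term :
    \sum_(0 <= b < p) (dilate (w ^+ b) H * \prod_(0 <= c < p | c != b) dilate (w ^+ c) A)
    = \sum_(0 <= b < p) dilate (w ^+ b) T.
  apply: eq_big_nat => b /andP[_ lt_b_p].
  rewrite /T rmorphM rmorph_prod /=; congr (_ * _).
  symmetry; under eq_bigr do rewrite dilate_dilate -exprD addnC.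
  apply: (prod_shift_mod (F := fun k => dilate (w ^+ k) A)) => // k.
  by rewrite prim_expr_mod.
have [Z SZ expand] := prod_perturb_expand (e := (p ^ j)%:R)
  p (rpred_nat _ _) (fun b => Sdilate b A SA) (fun b => Sdilate b H SH).
exists (decimate p T \Po 'X^p + (p ^ j.-1)%:R * Z).
  by rewrite rpredD ?rpredM ?rpred_nat ?polyOver_comp ?polyOver_decimate ?polyOverXn.
rewrite /orbit_prod; under eq_bigr do rewrite rmorphD rmorphM rmorph_nat /=.
rewrite expand cross_term sum_dilate_orbit.
case: j j_gt0 {expand} => // j _; rewrite !natrX /=.
rewrite mulrDr addrA mulrA -exprSr mulrA -exprD -exprM.
by congr (_ + _ * _); rewrite muln2 -addnn addSnnS addnC.
Qed.

End GraeffeStep.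

Section UnityProduct.
Variable R : idomainType.
Implicit Types (z : R) (A B H : {poly R}).

Definition unity_prod N z A := \prod_(k < N) A.[z ^+ k].

Lemma prim_root_expn_gt0 p n z : (p ^ n.+1).-primitive_root z -> (0 < p)%N.
Proof. by move/prim_order_gt0; rewrite expn_gt0 orbF. Qed.

Lemma prim_root_pow_order_p p n z :
  (p ^ n.+1).-primitive_root z -> p.-primitive_root (z ^+ (p ^ n)).
Proof.
move=> z_prim; have := dvdn_prim_root z_prim (dvdn_exp2l p (ltn0Sn n)).
by rewrite expn1 expnS mulKn // (prim_root_expn_gt0 z_prim).
Qed.

Lemma prim_root_pow_p p n z :
  (p ^ n.+1).-primitive_root z -> (p ^ n).-primitive_root (z ^+ p).
Proof.
move=> z_prim; have := dvdn_prim_root z_prim (dvdn_exp2l p (leqnSn n)).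
by rewrite expnS mulnK // expn_gt0 (prim_root_expn_gt0 z_prim).
Qed.

Lemma unity_prod_graeffe p n z B : (p ^ n.+1).-primitive_root z ->
  unity_prod (p ^ n.+1) z B
  = unity_prod (p ^ n) (z ^+ p) (decimate p (orbit_prod p (z ^+ (p ^ n)) B)).
Proof.
move=> z_prim; have w_prim := prim_root_pow_order_p z_prim.
(* The exponents k < p ^ n.+1 are written k = a + b * p ^ n with a < p ^ n, b < p. *)
rewrite /unity_prod.
under [RHS]eq_bigr do rewrite -exprM mulnC exprM horner_decimate_orbit_prod //.
rewrite -(big_mkord xpredT (fun k => B.[z ^+ k])) expnS big_nat_mul.
under eq_bigr => i _ do rewrite -[(i * p ^ n)%N]add0n big_addn mulSn addnK.
rewrite exchange_big_nat /= big_mkord.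
by apply: eq_bigr => a _; apply: eq_bigr => b _; rewrite -exprM -exprD addnC mulnC.
Qed.

Lemma unity_prod_cong p (S : subringClosed R) n z A H j :
  (p ^ n).-primitive_root z -> z \in S ->
  A \is a polyOver S -> H \is a polyOver S -> (0 < j)%N ->
  exists2 c, c \in S &
    unity_prod (p ^ n) z (A + (p ^ j)%:R * H)
    = unity_prod (p ^ n) z A + (p ^ (j + n))%:R * c.
Proof.
elim: n z A H j => [|n IHn] z A H j z_prim Sz SA SH j_gt0.
  exists H.[1]; first by rewrite rpred_horner ?rpred1.
  by rewrite /unity_prod !big_ord1 expr0 hornerD mulr_natl hornerMn -mulr_natl addn0.
have p_gt0 := prim_root_expn_gt0 z_prim; have w_prim := prim_root_pow_order_p z_prim.
have wS : z ^+ (p ^ n) \in S by rewrite rpredX.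
have [W SW cong_W] := orbit_prod_cong w_prim wS SA SH j_gt0.
rewrite !unity_prod_graeffe // cong_W decimateD // decimate_natM //.
have [c Sc ->] := IHn (z ^+ p) _ _ j.+1 (prim_root_pow_p z_prim) (rpredX _ Sz)
  (polyOver_decimate p_gt0 (polyOver_orbit_prod p wS SA))
  (polyOver_decimate p_gt0 SW) (ltn0Sn j).
by exists c; rewrite // addSnnS.
Qed.

Lemma unity_prod_intr N z (f : {poly int}) : N.-primitive_root z ->
  exists a : int, unity_prod N z (map_poly intr f) = a%:~R.
Proof.
move=> z_prim; have N_gt0 := prim_order_gt0 z_prim.
have size_f : (size (map_poly intr f : {poly R}) <= size f)%N by apply: size_poly.
(* [C] is the circulant matrix of multiplication by [f] modulo ['X^N - 1]; the
   columns of the Vandermonde matrix [V] are its eigenvectors. *)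
pose shift (i : 'I_N) (l : nat) : 'I_N := Ordinal (ltn_pmod (i + l) N_gt0).
pose C : 'M[int]_N := \matrix_(i, j) \sum_(l < size f | shift i l == j) f`_l.
pose V : 'M[R]_N := \matrix_(i, k) (z ^+ k) ^+ i.
have CV : map_mx intr C *m V = V *m diag_mx (\row_k (map_poly intr f).[z ^+ k]).
  apply/matrixP => i k; rewrite mul_mx_diag !mxE.
  under eq_bigr do rewrite !mxE rmorph_sum mulr_suml big_mkcond.
  rewrite exchange_big /=.
  under eq_bigr => l _.
    rewrite (eq_bigr (fun j => if j == shift i l then intr f`_l * (z ^+ k) ^+ shift i l
                               else 0)); last first.
      by move=> j _; rewrite eq_sym; case: eqP => [-> |].
    rewrite -big_mkcond big_pred1_eq.
  over.
  have zkN : (z ^+ k) ^+ N = 1 by rewrite exprAC (prim_expr_order z_prim) expr1n.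
  under eq_bigr do rewrite /= (expr_mod _ zkN) exprD mulrCA.
  rewrite -mulr_sumr (horner_coef_wide _ size_f); congr (_ * _).
  by apply: eq_bigr => l _; rewrite coef_map.
have detV : \det V != 0.
  have -> : V = Vandermonde N (\row_k z ^+ k) by apply/matrixP => i k; rewrite !mxE.
  rewrite det_Vandermonde; apply/prodf_neq0 => i _; apply/prodf_neq0 => j lt_ij.
  by rewrite !mxE subr_eq0 (eq_prim_root_expr z_prim) !modn_small // gtn_eqF.
have := congr1 determinant CV; rewrite !det_mulmx det_diag det_map_mx [RHS]mulrC.
move=> /(mulIf detV) detC; exists (\det C); rewrite /unity_prod detC.
by apply: eq_bigr => k _; rewrite mxE.
Qed.

End UnityProduct.

Lemma prod_sub_unity (F : fieldType) N (z y : F) : N.-primitive_root z ->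
  \prod_(k < N) (y - z ^+ k) = y ^+ N - 1.
Proof.
move=> z_prim; have := congr1 (fun P : {poly F} => P.[y]) (factor_Xn_sub_1 z_prim).
rewrite horner_prod big_mkord hornerD hornerN hornerXn hornerC => <-.
by apply: eq_bigr => k _; rewrite hornerXsubC.
Qed.

Lemma totient_even m : odd m -> (2 < m)%N -> ~~ odd (totient m).
Proof.
move=> m_odd m_gt2; have m_gt1 : (1 < m)%N by apply: ltnW.
have q_prime := pdiv_prime m_gt1; have q_dvd_m := pdiv_dvd m.
have q_odd : odd (pdiv m).
  case: (even_prime q_prime) => [q2|//]; move: m_odd.
  by rewrite -(divnK q_dvd_m) oddM q2 andbF.
rewrite totientE ?(ltnW m_gt1) // (bigD1_seq (pdiv m)) ?primes_uniq //=; last first.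
  by rewrite mem_primes q_prime (ltnW m_gt1).
by rewrite !oddM -subn1 oddB ?prime_gt0 // q_odd.
Qed.

Lemma card_coprime_ord m : #|[pred i : 'I_m | coprime i m]| = totient m.
Proof.
rewrite totient_count_coprime big_mkord -sum1_card big_mkcond /=.
by apply: eq_bigr => i _; rewrite inE /= coprime_sym; case: coprime.
Qed.

Lemma even_expn_succ_mul_totient p n m :
  prime p -> ~~ (p %| m)%N -> (1 < m)%N -> ~~ odd ((p ^ n).+1 * totient m).
Proof.
move=> p_prime p_ndvd_m m_gt1; rewrite oddM negb_and /= oddX negbK.
case: (even_prime p_prime) => [p2 | ->]; last by rewrite orbT.
have m_odd : odd m by move: p_ndvd_m; rewrite p2 dvdn2 negbK.
rewrite totient_even ?orbT //.
by move: m_gt1 m_odd {p_ndvd_m}; case: m => [|[|[|m]]].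
Qed.

Lemma Cyclotomic1 : 'Phi_1 = 'X - 1.
Proof.
have := prod_Cyclotomic (ltn0Sn 0).
by rewrite (_ : divisors 1 = [:: 1%N]) // big_seq1 expr1.
Qed.

Lemma unity_prod_Cyclotomic p n z m : prime p -> ~~ (p %| m)%N ->
  (p ^ n).-primitive_root z ->
  unity_prod (p ^ n) z (map_poly intr 'Phi_m) = ('Phi_m).[1]%:~R :> algC.
Proof.
move=> p_prime p_ndvd_m z_prim; set N := (p ^ n)%N.
have m_gt0 : (0 < m)%N by rewrite lt0n; apply: contraNneq p_ndvd_m => ->.
have [w w_prim] := C_prim_root_exists m_gt0.
have wN_prim : m.-primitive_root (w ^+ N).
  by rewrite prim_root_exp_coprime // coprimeXl // prime_coprime.
have Phi_at1 : ('Phi_m).[1]%:~R = \prod_(i < m | coprime i m) (1 - (w ^+ N) ^+ i) :> algC.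
  have := horner_map (intr : {rmorphism int -> algC}) 'Phi_m 1.
  rewrite rmorph1 => <-; rewrite (Cintr_Cyclotomic wN_prim) horner_prod.
  by apply: eq_bigr => i _; rewrite hornerXsubC.
have factor i : \prod_(k < N) (z ^+ k - w ^+ i) = (-1) ^+ N.+1 * (1 - (w ^+ N) ^+ i).
  under eq_bigr do rewrite -opprB.
  by rewrite prodrN card_ord prod_sub_unity // exprAC exprSr -mulrA mulN1r opprB.
rewrite /unity_prod (Cintr_Cyclotomic w_prim).
under eq_bigr do rewrite horner_prod.
rewrite exchange_big /=.
under eq_bigr do under eq_bigr do rewrite hornerXsubC.
under eq_bigr do rewrite factor.
(* The sign (-1)^((p^n + 1) totient m) can only be -1 when m = 1, where Phi_1(1) = 0. *)
rewrite big_split /= prodr_const card_coprime_ord -Phi_at1 -exprM -signr_odd.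
have [-> | m_neq1] := eqVneq m 1%N; first by rewrite Cyclotomic1 hornerXsubC subrr mulr0.
rewrite (negbTE (even_expn_succ_mul_totient _ p_prime p_ndvd_m _)) ?mul1r //.
by rewrite ltn_neqAle eq_sym m_neq1.
Qed.

Lemma prod_divisors_Cyclotomic_horner1 m : (0 < m)%N ->
  \prod_(d <- divisors m | (1 < d)%N) ('Phi_d).[1] = m%:R :> int.
Proof.
move=> m_gt0; have := prod_Cyclotomic m_gt0.
rewrite (bigD1_seq 1%N) ?divisor1 ?divisors_uniq // Cyclotomic1 subrX1 /=.
move=> /(mulfI (monic_neq0 (monicXsubC 1))) /(congr1 (horner^~ 1)).
rewrite horner_prod horner_sum /=.
under [in X in _ = X -> _]eq_bigr do rewrite hornerXn expr1n.
rewrite sumr_const card_ord => <-.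
rewrite big_seq_cond [RHS]big_seq_cond; apply: eq_bigl => d.
case d_dvd_m: (d \in divisors m) => //=.
have d_gt0 : (0 < d)%N by apply: (dvdn_gt0 m_gt0); rewrite dvdn_divisors ?d_dvd_m.
by case: d d_gt0 {d_dvd_m} => [|[|d]].
Qed.

Section MangoldtExp.
Local Open Scope nat_scope.

Definition mangoldt_exp n :=
  if (1 < n) && (n == pdiv n ^ logn (pdiv n) n) then pdiv n else 1.

Lemma mangoldt_exp_gt0 n : 0 < mangoldt_exp n.
Proof. by rewrite /mangoldt_exp; case: ifP => // _; apply: pdiv_gt0. Qed.

Lemma pdiv_pfactor_logn q d : prime q -> 1 < d -> d = q ^ logn q d -> pdiv d = q.
Proof.
move=> q_prime d_gt1 d_eq; move: d_gt1; rewrite d_eq.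
by case: (logn q d) => [|k] //; rewrite pdiv_pfactor.
Qed.

Lemma logn_mangoldt_exp q d :
  prime q -> logn q (mangoldt_exp d) = (1 < d) && (d == q ^ logn q d).
Proof.
move=> q_prime; rewrite /mangoldt_exp; case: ifP => [/andP[d_gt1 /eqP d_eq] | d_npp].
  rewrite (logn_prime _ (pdiv_prime d_gt1)) d_gt1 /=.
  have [-> | q_neq] := eqVneq q (pdiv d); first by rewrite -d_eq eqxx.
  by case: eqP => // /(pdiv_pfactor_logn q_prime d_gt1) d_pdiv; rewrite d_pdiv eqxx in q_neq.
rewrite logn1; case: andP => // [[d_gt1 /eqP d_eq]].
by move: d_npp; rewrite d_gt1 (pdiv_pfactor_logn q_prime d_gt1 d_eq) -d_eq eqxx.
Qed.

Lemma logn_prod q I (r : seq I) (P : pred I) (F : I -> nat) :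
  (forall i, 0 < F i) ->
  logn q (\prod_(i <- r | P i) F i) = \sum_(i <- r | P i) logn q (F i).
Proof.
move=> F_gt0; elim: r => [|i r IHr]; first by rewrite !big_nil logn1.
by rewrite !big_cons; case: (P i); rewrite // lognM ?IHr ?prodn_gt0.
Qed.

Lemma count_pfactor_divisor q m d : prime q -> 0 < m -> d \in divisors m ->
  \sum_(1 <= k < m) (d == q ^ k) = (1 < d) && (d == q ^ logn q d).
Proof.
move=> q_prime m_gt0 d_dvd_m; have q_gt1 := prime_gt1 q_prime.
have le_d_m : d <= m by apply: dvdn_leq => //; rewrite dvdn_divisors.
case: andP => [[d_gt1 /eqP d_eq] | d_npp].
  rewrite (eq_bigr (fun k => (k == logn q d) : nat)); last first.
    by move=> k _; rewrite {1}d_eq eqn_exp2l // eq_sym.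
  have logn_lt_m : logn q d < m by apply: leq_trans (ltn_expl _ q_gt1) _; rewrite -d_eq.
  have logn_gt0 : 0 < logn q d.
    by rewrite lt0n; apply: contraTneq d_gt1 => logn0; rewrite d_eq logn0.
  by rewrite -big_mkcond /= big_nat1_eq logn_gt0 logn_lt_m.
rewrite big1_seq // => k /andP[_ /[!mem_index_iota] /andP[k_gt0 _]].
case: eqP => // d_eq; case: d_npp; split; last by rewrite d_eq pfactorK.
by rewrite d_eq; apply: leq_trans (ltn_expl _ q_gt1).
Qed.

Lemma prod_divisors_mangoldt_exp m : 0 < m ->
  \prod_(d <- divisors m | 1 < d) mangoldt_exp d = m.
Proof.
move=> m_gt0; apply: eqn_from_log => //; first exact: prodn_gt0 mangoldt_exp_gt0.
move=> q; have [q_prime | q_nprime] := boolP (prime q); last first.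
  have logn0 k : logn q k = 0 by rewrite lognE (negbTE q_nprime).
  by rewrite !logn0.

rewrite logn_prod; last exact: mangoldt_exp_gt0.
under eq_bigr do rewrite logn_mangoldt_exp //.
rewrite (logn_count_dvd _ q_prime).
have count_dvd k : q ^ k %| m = \sum_(d <- divisors m) (d == q ^ k) :> nat.
  rewrite dvdn_divisors // -(count_uniq_mem _ (divisors_uniq m)) -sum1_count big_mkcond.
  by apply: eq_bigr => d _ /=; case: (d == q ^ k).
under [RHS]eq_bigr do rewrite count_dvd.
rewrite exchange_big /= big_mkcond big_seq [RHS]big_seq; apply: eq_bigr => d d_dvd_m.
by rewrite count_pfactor_divisor //; case: (1 < d).
Qed.

Lemma mangoldt_exp_pfactor l e : prime l -> 0 < e -> mangoldt_exp (l ^ e) = l.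
Proof.
move=> l_prime; case: e => // e _.
rewrite /mangoldt_exp pdiv_pfactor // pfactorK // eqxx andbT.
by rewrite (ltn_exp2l 0) // prime_gt1.
Qed.

Lemma mangoldt_exp_not_pfactor m :
  (forall l e, prime l -> 0 < e -> m != l ^ e) -> mangoldt_exp m = 1.
Proof.
move=> not_pfactor; rewrite /mangoldt_exp; case: ifP => // /andP[m_gt1 /eqP m_eq].
have logn_gt0 : 0 < logn (pdiv m) m.
  by rewrite lt0n; apply: contraTneq m_gt1 => logn0; rewrite m_eq logn0.
by have := not_pfactor _ _ (pdiv_prime m_gt1) logn_gt0; rewrite -m_eq eqxx.
Qed.

End MangoldtExp.

Lemma Cyclotomic_horner1 m : (1 < m)%N -> ('Phi_m).[1] = (mangoldt_exp m)%:R.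
Proof.
elim/ltn_ind: m => m IHm m_gt1; have m_gt0 := ltnW m_gt1.
have m_dvd_m : m \in divisors m by apply: divisors_id.
have Phi_prod := prod_divisors_Cyclotomic_horner1 m_gt0.
have mangoldt_prod := prod_divisors_mangoldt_exp m_gt0.
rewrite big_mkcond (bigD1_seq m) ?divisors_uniq //= m_gt1 in Phi_prod.
rewrite big_mkcond (bigD1_seq m) ?divisors_uniq //= m_gt1 in mangoldt_prod.
set rest := (\prod_(d <- divisors m | d != m) _)%N in mangoldt_prod.
have rest_eq : \prod_(d <- divisors m | d != m) (if (1 < d)%N then ('Phi_d).[1] else 1)
               = rest%:R.
  rewrite natr_prod big_seq_cond [RHS]big_seq_cond.
  apply: eq_bigr => d /andP[d_dvd_m d_neq_m]; case: ifP => // d_gt1.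
  by apply: IHm => //; rewrite ltn_neqAle d_neq_m dvdn_leq // dvdn_divisors.
have rest_neq0 : rest%:R != 0 :> int.
  by rewrite pnatr_eq0 -lt0n prodn_gt0 // => d; case: ifP => // _; apply: mangoldt_exp_gt0.
by apply: (mulIf rest_neq0); rewrite -natrM mangoldt_prod -Phi_prod rest_eq.
Qed.

Lemma padic_cvg_Aint p (a : nat -> algC) L : (0 < p)%N ->
  (forall n, a n \in Crat) ->
  (forall n, exists2 c, c \in Aint & a n - L%:~R = (p ^ n)%:R * c) ->
  padic_cvg p a L.
Proof.
move=> p_gt0 a_rat a_cong k; exists k => n le_k_n.
have [c Ac a_eq] := a_cong n; set x := (p ^ (n - k))%:R * c.
have a_eq_k : a n - L%:~R = (p ^ k)%:R * x by rewrite a_eq mulrA -natrM -expnD subnKC.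
have pk_neq0 : (p ^ k)%:R != 0 :> algC by rewrite pnatr_eq0 -lt0n expn_gt0 p_gt0.
have x_rat : x \in Crat.
  have -> : x = (a n - L%:~R) / (p ^ k)%:R by rewrite a_eq_k [_ * x]mulrC mulfK.
  by rewrite rpred_div ?rpredB ?rpred_int ?rpred_nat.
have /intrP[x_int x_eq] := Cint_rat_Aint x_rat (rpredM (rpred_nat _ _) Ac).
by exists x_int; rewrite a_eq_k x_eq.
Qed.

Lemma polyz_dvd_coef_split (p : int) (f g : {poly int}) :
  (forall i, (p %| f`_i - g`_i)%Z) -> exists G, f = g + p%:P * G.
Proof.
move=> p_dvd; exists (\poly_(i < size (f - g)) ((f - g)`_i %/ p)%Z).
apply/polyP => i; rewrite coefD coefCM coef_poly.
case: ltnP => [_ | le_fg_i]; first by rewrite mulrC divzK ?coefB // addrC subrK.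
by rewrite mulr0 addr0; apply/eqP; rewrite -subr_eq0 -coefB nth_default.
Qed.

Lemma res_unityE N z f : res_unity N z f = unity_prod N z (map_poly intr f).
Proof. by []. Qed.

Lemma polyOver_intr_Aint (f : {poly int}) : map_poly intr f \is a polyOver Aint.
Proof. by apply/polyOverP => i; rewrite coef_map Aint_int. Qed.

Theorem corollary4p10 (p : nat) (f : {poly int}) (m : nat) :
  prime p -> f \is monic -> (0 < m)%N -> ~~ (p %| m)%N ->
  (forall i : nat, (p%:Z %| f`_i - ('Phi_m)`_i)%Z) ->
  (forall z : nat -> algC, (forall n, (p ^ n)%N.-primitive_root (z n)) ->
     padic_cvg p (fun n => res_unity (p ^ n) (z n) f) ('Phi_m).[1])
  /\ ((2 <= m)%N ->
      forall l e : nat, prime l -> (0 < e)%N -> m = (l ^ e)%N ->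
        ('Phi_m).[1] = l%:Z)
  /\ ((2 <= m)%N ->
      ~ (exists l e : nat, [/\ prime l, (0 < e)%N & m = (l ^ e)%N]) ->
        ('Phi_m).[1] = 1).
Proof.
move=> p_prime _ _ p_ndvd_m f_cong; split; [|split].
- move=> z z_prim; apply: padic_cvg_Aint (prime_gt0 p_prime) _ _ => n; rewrite res_unityE.
    by have [a ->] := unity_prod_intr f (z_prim n); apply: rpred_int.
  have [G ->] := polyz_dvd_coef_split f_cong.
  have [c Ac cong_c] := unity_prod_cong (z_prim n) (Aint_prim_root (z_prim n))
    (polyOver_intr_Aint 'Phi_m) (polyOver_intr_Aint G) (ltn0Sn 0).
  exists (p%:R * c); first by rewrite rpredM ?rpred_nat.
  rewrite rmorphD rmorphM /= map_polyC /= polyC_natr expn1 in cong_c *.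
  rewrite cong_c unity_prod_Cyclotomic // addrC addKr.
  by rewrite mulrA -natrM -expnSr add1n.
- move=> m_gt1 l e l_prime e_gt0 m_eq.
  by rewrite Cyclotomic_horner1 // m_eq mangoldt_exp_pfactor // natz.
- move=> m_gt1 not_pfactor; rewrite Cyclotomic_horner1 // mangoldt_exp_not_pfactor //.
  by move=> l e l_prime e_gt0; apply/eqP => m_eq; apply: not_pfactor; exists l, e.
Qed.
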